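(* Let $R$ be a ring all of whose idempotents are central, let $I$ be an ideal of $R$, and suppose $R$ is weakly $I$-clean. Let $n\ge 1$ and let $S=\{[a_{ij}]\in T_n(R)\mid a_{ii}=a_{jj}\text{ for all }i,j\}$. Then $I'=\{[a_{ij}]\in S\mid a_{11}\in I\}$ is an ideal of $S$, the idempotents of $S$ are exactly the matrices $eI_n$ with $e\in Idem(R)$, and $S$ is weakly $I'$-clean.
   Context: All rings are associative with identity; $Idem(R)$ is the set of idempotents of $R$. $T_n(R)$ is the ring of $n\times n$ upper triangular matrices over $R$ with the usual operations, and $I_n$ is the identity matrix. For an ideal $I$ of $R$, $R$ is weakly $I$-clean if for every $x\in R$ there is $e\in Idem(R)$ such that $x-e\in I$ or $x+e\in I$. *)

From HB Require Import structures.
From mathcomp Require Import all_boot all_order all_algebra.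
Set Implicit Arguments. Unset Strict Implicit. Unset Printing Implicit Defensive.
Import GRing.Theory.
Local Open Scope ring_scope.

Definition idem (R : pzRingType) (x : R) : Prop := x * x = x.

Definition idem_central (R : pzRingType) : Prop :=
  forall e : R, idem e -> forall r : R, e * r = r * e.

Definition is_ideal (R : pzRingType) (I : R -> Prop) : Prop :=
  [/\ I 0, (forall x y, I x -> I y -> I (x - y)),
      (forall r x, I x -> I (r * x)) & (forall r x, I x -> I (x * r))].

Definition weakly_clean (R : pzRingType) (I : R -> Prop) : Prop :=
  forall x : R, exists e : R, idem e /\ (I (x - e) \/ I (x + e)).

Definition Smat (R : pzRingType) (n : nat) (A : 'M[R]_n) : Prop :=
  (forall i j : 'I_n, (j < i)%N -> A i j = 0) /\
  (forall i j : 'I_n, A i i = A j j).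

(* I' = { A in S | a_11 in I }, where the first index is i0 *)
Definition Iprime (R : pzRingType) (I : R -> Prop) (n : nat) (i0 : 'I_n)
  (A : 'M[R]_n) : Prop := Smat A /\ I (A i0 i0).

Definition idemS (R : pzRingType) (n : nat) (A : 'M[R]_n) : Prop :=
  Smat A /\ A *m A = A.

Definition is_ideal_of_S (R : pzRingType) (n : nat) (J : 'M[R]_n -> Prop) : Prop :=
  [/\ (forall A, J A -> Smat A), J 0,
      (forall A B, J A -> J B -> J (A - B)),
      (forall X A, Smat X -> J A -> J (X *m A)) &
      (forall X A, Smat X -> J A -> J (A *m X))].

Definition weakly_clean_S (R : pzRingType) (n : nat) (J : 'M[R]_n -> Prop) : Prop :=
  forall X, Smat X -> exists E, idemS E /\ (J (X - E) \/ J (X + E)).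

(* An idempotent E of S has an idempotent diagonal entry e, and by induction on
   j - i the entry a_ij above the diagonal satisfies a_ij = e a_ij + a_ij e;
   since e is central this forces a_ij = 0, so E = e I_n. Conversely every
   idempotent of R gives the idempotent e I_n of S, and weak I-cleanness of the
   diagonal entry x of X in S lifts: if x -+ e lies in I then X -+ e I_n lies in I'. *)
From HB Require Import structures.
From mathcomp Require Import all_boot all_order all_algebra.
Set Implicit Arguments. Unset Strict Implicit. Unset Printing Implicit Defensive.
Import GRing.Theory.
Local Open Scope ring_scope.

Lemma idem_double_eq0 (R : pzRingType) (e x : R) :
  idem e -> x = e * x + e * x -> x = 0.
Proof.
move=> ee Dx; have ex : e * x = x by rewrite {2}Dx {1}Dx mulrDr !mulrA ee.
have : x + 0 = x + x by rewrite addr0 {1}Dx ex.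
by move/addrI/esym.
Qed.

Section UpperConstantDiagonal.

Variables (R : pzRingType) (n : nat).
Implicit Types (A B : 'M[R]_n) (i j k : 'I_n).

Lemma mxdiag_mul_upper A B i :
  (forall i j, (j < i)%N -> A i j = 0) ->
  (forall i j, (j < i)%N -> B i j = 0) ->
  (A *m B) i i = A i i * B i i.
Proof.
move=> A_up B_up; rewrite !mxE (bigD1 i) //= big1 ?addr0 // => k /negbTE ki.
case: (ltngtP k i) => [lt_ki|lt_ik|/val_inj eq_ki].
- by rewrite A_up ?mul0r.
- by rewrite B_up ?mulr0.
- by rewrite eq_ki eqxx in ki.
Qed.

Lemma Smat_mxdiag_mul A B i : Smat A -> Smat B -> (A *m B) i i = A i i * B i i.
Proof. by move=> [A_up _] [B_up _]; apply: mxdiag_mul_upper. Qed.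

Lemma Smat_mul A B : Smat A -> Smat B -> Smat (A *m B).
Proof.
move=> SA SB; have [A_up A_diag] := SA; have [B_up B_diag] := SB; split.
- move=> i j lt_ji; rewrite !mxE big1 // => k _.
  case: (ltnP k i) => [lt_ki|le_ik]; first by rewrite A_up ?mul0r.
  by rewrite B_up ?mulr0 // (leq_trans lt_ji le_ik).
- by move=> i j; rewrite !Smat_mxdiag_mul // (A_diag i j) (B_diag i j).
Qed.

Lemma Smat_opp A : Smat A -> Smat (- A).
Proof.
move=> [A_up A_diag]; split=> i j; rewrite !mxE; last by rewrite (A_diag i j).
by move=> lt_ji; rewrite A_up ?oppr0.
Qed.

Lemma Smat_add A B : Smat A -> Smat B -> Smat (A + B).
Proof.
move=> [A_up A_diag] [B_up B_diag]; split=> i j; rewrite !mxE.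
- by move=> lt_ji; rewrite A_up ?B_up ?addr0.
- by rewrite (A_diag i j) (B_diag i j).
Qed.

Lemma Smat_sub A B : Smat A -> Smat B -> Smat (A - B).
Proof. by move=> SA /Smat_opp; apply: Smat_add. Qed.

Lemma Smat_scalar (a : R) : Smat (a%:M : 'M[R]_n).
Proof.
split=> i j; rewrite !mxE ?eqxx // => lt_ji.
by rewrite eq_sym -val_eqE (ltn_eqF lt_ji).
Qed.

Lemma idem_scalar_mx (e : R) : idem e -> (e%:M : 'M[R]_n) *m e%:M = e%:M.
Proof. by rewrite /idem -scalar_mxM => ->. Qed.

Section Idempotents.

Hypothesis idemC : idem_central R.
Variables (A : 'M[R]_n) (i0 : 'I_n).
Hypotheses (SA : Smat A) (AA : A *m A = A).

Let e := A i0 i0.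

Lemma Smat_idem_diag : idem e.
Proof. by rewrite /idem /e -Smat_mxdiag_mul // AA. Qed.

Lemma Smat_idem_above_diag_eq0 i j : (i < j)%N -> A i j = 0.
Proof.
have [A_up A_diag] := SA; move: {2}(j - i)%N (erefl (j - i)%N) => d.
elim/ltn_ind: d i j => d IH i j def_d lt_ij.
have inner k : k != i -> k != j -> A i k * A k j = 0.
  move=> ki kj; case: (ltnP k i) => [lt_ki|le_ik]; first by rewrite A_up ?mul0r.
  case: (ltnP j k) => [lt_jk|le_kj]; first by rewrite (A_up k j) ?mulr0.
  have lt_ik : (i < k)%N by rewrite ltn_neqAle eq_sym ki.
  have lt_kj : (k < j)%N by rewrite ltn_neqAle kj.
  by rewrite (IH (k - i)%N) ?mul0r // -def_d ltn_sub2r.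
have Daij : A i j = e * A i j + A i j * e.
  rewrite -{1}AA mxE (bigD1 i) //= (bigD1 j) /=; last by rewrite neq_ltn lt_ij orbT.
  rewrite big1 ?addr0 => [|k /andP[]]; last exact: inner.
  by rewrite /e (A_diag i i0) (A_diag j i0).
apply: (idem_double_eq0 Smat_idem_diag).
by rewrite {1}Daij (idemC Smat_idem_diag).
Qed.

Lemma Smat_idem_scalar : A = e%:M.
Proof.
have [A_up A_diag] := SA.
apply/matrixP => i j; rewrite mxE.
case: (ltngtP i j) => [lt_ij|lt_ji|/val_inj <-].
- by rewrite Smat_idem_above_diag_eq0 // -val_eqE (ltn_eqF lt_ij).
- by rewrite A_up // eq_sym -val_eqE (ltn_eqF lt_ji).
- by rewrite eqxx /e (A_diag i i0).
Qed.

End Idempotents.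

Lemma idemS_scalarP (i0 : 'I_n) A :
  idem_central R -> idemS A <-> exists e : R, idem e /\ A = e%:M.
Proof.
move=> idemC; split=> [[SA AA]|[e [ee ->]]].
- by exists (A i0 i0); split; [exact: Smat_idem_diag | exact: Smat_idem_scalar].
- by split; [exact: Smat_scalar | exact: idem_scalar_mx].
Qed.

Variables (I : R -> Prop) (i0 : 'I_n).

Lemma Iprime_ideal : is_ideal I -> is_ideal_of_S (Iprime I i0).
Proof.
move=> [I0 IB IMl IMr]; split.
- by move=> A [].
- by split; [split=> i j; rewrite !mxE | rewrite mxE].
- by move=> A B [SA IA] [SB IB']; split; [exact: Smat_sub | rewrite !mxE; apply: IB].
- move=> X A SX [SA IA]; split; first exact: Smat_mul.
  by rewrite Smat_mxdiag_mul //; apply: IMl.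
- move=> X A SX [SA IA]; split; first exact: Smat_mul.
  by rewrite Smat_mxdiag_mul //; apply: IMr.
Qed.

Lemma Iprime_weakly_clean : weakly_clean I -> weakly_clean_S (Iprime I i0).
Proof.
move=> cleanI X SX; have [e [ee Ie]] := cleanI (X i0 i0).
exists e%:M; split; first by split; [exact: Smat_scalar | exact: idem_scalar_mx].
case: Ie => Ie; [left | right]; split; rewrite ?mxE ?eqxx //.
- exact/Smat_sub/Smat_scalar.
- exact/Smat_add/Smat_scalar.
Qed.

End UpperConstantDiagonal.

Theorem mainTheorem4 (R : pzRingType) (I : R -> Prop) (n : nat) (hn : (0 < n)%N) :
  idem_central R -> is_ideal I -> weakly_clean I ->
  [/\ is_ideal_of_S (Iprime I (Ordinal hn)),
      (forall A : 'M[R]_n, idemS A <-> exists e : R, idem e /\ A = e%:M) &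
      weakly_clean_S (Iprime I (Ordinal hn))].
Proof.
move=> idemC idealI cleanI; split.
- exact: Iprime_ideal.
- by move=> A; apply: (idemS_scalarP (Ordinal hn)).
- exact: Iprime_weakly_clean.
Qed.
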